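(* Let $t\ge 2$, let $n_1,\dots,n_t$ be positive integers, and let $G=K_{n_1,\dots,n_t}$ be the complete $t$-partite graph with partite sets $V_1,\dots,V_t$, $|V_i|=n_i$. Let $N_t=\{1,\dots,t\}$ and $f(I)=\sum_{i\in I}n_i$ for $I\subseteq N_t$. Let $p$ be a positive integer with $f(N_t)>p$. Then $|I_D|\le t-2$ for every $\gamma_p(G)$-set $D$ with $f(I_D)<p$.
   Context: A set $S\subseteq V(G)$ is a $p$-dominating set of $G$ if every vertex $v\in V(G)\setminus S$ has at least $p$ neighbors in $S$. The $p$-domination number $\gamma_p(G)$ is the minimum cardinality of a $p$-dominating set of $G$, and a $\gamma_p(G)$-set is a $p$-dominating set of cardinality $\gamma_p(G)$. For $D\subseteq V(G)$ write $D_i=V_i\cap D$ for $i\in N_t$ and $I_D=\{i\in N_t: |D_i|=|V_i|\}$. *)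

From mathcomp Require Import all_boot.
Set Implicit Arguments. Unset Strict Implicit. Unset Printing Implicit Defensive.

Definition p_dominating (T : finType) (adj : rel T) (p : nat) (S : {set T}) : bool :=
  [forall v, (v \notin S) ==> (p <= #|[set u in S | adj v u]|)].

Definition gamma_p_set (T : finType) (adj : rel T) (p : nat) (D : {set T}) : Prop :=
  p_dominating adj p D /\
  forall S : {set T}, p_dominating adj p S -> #|D| <= #|S|.

(* Complete t-partite graph K_{n_1,...,n_t}: vertices are pairs (i, k) with
   i : 'I_t the part index and k : 'I_(n i); adjacent iff in different parts. *)
Definition kpart_vertex (t : nat) (n : 'I_t -> nat) : finType :=
  {i : 'I_t & 'I_(n i)}.

Definition kpart_adj (t : nat) (n : 'I_t -> nat) : rel (kpart_vertex n) :=
  fun x y => tag x != tag y.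

Definition part_of (t : nat) (n : 'I_t -> nat) (D : {set kpart_vertex n}) (i : 'I_t)
  : {set kpart_vertex n} := [set x in D | tag x == i].

Definition I_D (t : nat) (n : 'I_t -> nat) (D : {set kpart_vertex n}) : {set 'I_t} :=
  [set i | #|part_of D i| == n i].

Definition fsum (t : nat) (n : 'I_t -> nat) (I : {set 'I_t}) : nat :=
  \sum_(i in I) n i.

From mathcomp Require Import all_boot.

Set Implicit Arguments.
Unset Strict Implicit.
Unset Printing Implicit Defensive.

(* If some part V_j is not contained in D, a vertex of V_j outside D has exactly
   the vertices of D in the other parts as D-neighbours, so p-domination gives
   p <= f(N_t \ {j}).  When |I_D| >= t - 1 and f(I_D) < p < f(N_t), such a j
   exists and I_D = N_t \ {j}. *)

Section CompletePartite.

Variables (t : nat) (n : 'I_t -> nat).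

Definition kpart_class (i : 'I_t) : {set kpart_vertex n} :=
  [set x | tag x == i].

Lemma kpart_classE (i : 'I_t) :
  kpart_class i = [set Tagged (fun j => 'I_(n j)) k | k : 'I_(n i)].
Proof.
apply/setP => -[j k]; rewrite inE.
apply/eqP/imsetP => /= [eq_ji | [k' _ /(congr1 tag)]] //.
by case: i / eq_ji; exists k.
Qed.

Lemma card_kpart_class (i : 'I_t) : #|kpart_class i| = n i.
Proof.
rewrite kpart_classE card_imset ?card_ord // => k k' /eqP.
by rewrite eq_Tagged => /eqP.
Qed.

Lemma part_ofE (D : {set kpart_vertex n}) (i : 'I_t) :
  part_of D i = D :&: kpart_class i.
Proof. by apply/setP => x; rewrite !inE. Qed.

Lemma card_part_of_le (D : {set kpart_vertex n}) (i : 'I_t) :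
  #|part_of D i| <= n i.
Proof. by rewrite part_ofE -(card_kpart_class i) subset_leq_card ?subsetIr. Qed.

Lemma card_sum_part_of (A : {set kpart_vertex n}) (P : pred 'I_t) :
  #|[set x in A | P (tag x)]| = \sum_(i | P i) #|part_of A i|.
Proof.
rewrite -sum1_card (partition_big (fun x : kpart_vertex n => tag x) P) => [|x];
  last by rewrite inE => /andP[].
apply: eq_bigr => i Pi; rewrite -sum1_card; apply: eq_bigl => x.
by rewrite !inE; case: eqP => [->|]; rewrite ?Pi ?andbT ?andbF.
Qed.

Lemma exists_notin_part (D : {set kpart_vertex n}) (i : 'I_t) :
  i \notin I_D D -> exists2 x, tag x = i & x \notin D.
Proof.
move=> notfull.
have [x /andP[/eqP tagx xD] | inD] :=
  pickP [pred x : kpart_vertex n | (tag x == i) && (x \notin D)].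
  by exists x.
case/negP: notfull; rewrite inE -(card_kpart_class i) part_ofE.
rewrite (setIidPr _) //; apply/subsetP => x; rewrite inE => tagx.
by move: (inD x); rewrite /= tagx => /negbFE.
Qed.

Lemma p_dominating_outside_part (p : nat) (D : {set kpart_vertex n}) (i : 'I_t) :
  p_dominating (@kpart_adj t n) p D -> i \notin I_D D ->
  p <= fsum n [set~ i].
Proof.
move=> /forallP dom /exists_notin_part[x <- xD].
apply: leq_trans (implyP (dom x) xD) _.
rewrite (card_sum_part_of D (fun j => tag x != j)) /fsum.
rewrite [in X in _ <= X](eq_bigl (fun j => tag x != j)) => [|j];
  last by rewrite !inE eq_sym.
by apply: leq_sum => j _; apply: card_part_of_le.
Qed.

End CompletePartite.

Theorem lemma3 (t : nat) (n : 'I_t -> nat) (p : nat)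
  (ht : 2 <= t) (hn : forall i, 0 < n i) (hp : 0 < p)
  (hf : p < fsum n [set: 'I_t])
  (D : {set kpart_vertex n}) :
  gamma_p_set (@kpart_adj t n) p D ->
  fsum n (I_D D) < p ->
  #|I_D D| <= t - 2.
Proof.
move=> [dom _] small; rewrite leqNgt; apply/negP => big.
have [j notj | full] := pickP [pred j | j \notin I_D D]; last first.
  have full_ID : I_D D = [set: 'I_t].
    by apply/setP => i; rewrite in_setT; apply/negbFE/full.
  by move: small; rewrite full_ID ltnNge ltnW.
have compl_j : I_D D = [set~ j].
  apply/eqP; rewrite eqEcard cardsC1 card_ord; apply/andP; split.
    by apply/subsetP => i; rewrite in_setC1; apply: contraTneq => ->.
  by apply: leq_trans big; rewrite -subSn // subSS subn1.
by move: (p_dominating_outside_part dom notj); rewrite -compl_j leqNgt small.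
Qed.
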